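(* Let $n\ge3$, $c\ge1$, $r_2\in\mathbb{C}^*$, and consider the representations $\omega'_j$ ($j=1,2,3$) of $UW_n(c)$ into $\mathrm{GL}_n(\mathbb{C})$ given, for $1\le i\le n-1$ and $1\le t\le c$, by $\omega'_j(\rho_i)=\mathrm{diag}\Big(I_{i-1},\begin{pmatrix}0&1\\1&0\end{pmatrix},I_{n-i-1}\Big)$ and $\omega'_1(\sigma_{i,t})=\mathrm{diag}\Big(I_{i-1},\begin{pmatrix}0&\frac{s_{2,t}}{r_2}\\ r_2s_{3,t}&0\end{pmatrix},I_{n-i-1}\Big)$, $\omega'_2(\sigma_{i,t})=\mathrm{diag}\Big(I_{i-1},\begin{pmatrix}0&\frac{s_{2,t}}{r_2}\\ 1&s_{4,t}\end{pmatrix},I_{n-i-1}\Big)$, $\omega'_3(\sigma_{i,t})=\mathrm{diag}\Big(I_{i-1},\begin{pmatrix}s_{1,t}&\frac{s_{2,t}}{r_2}\\ 1&0\end{pmatrix},I_{n-i-1}\Big)$, with all $s_{k,t}\in\mathbb{C}^*$. Then: (1) $\omega'_1$ is reducible if and only if $s_{2,t}=r_2$ and $s_{3,t}=\frac1{r_2}$ for all $1\le t\le c$; (2) $\omega'_2$ is reducible if and only if $\frac{s_{2,t}}{r_2}+s_{4,t}=1$ for all $1\le t\le c$; (3) $\omega'_3$ is reducible if and only if $s_{1,t}+\frac{s_{2,t}}{r_2}=1$ for all $1\le t\le c$.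
   Context: $UW_n(c)$ is the group with generators $\rho_i$ ($1\le i\le n-1$), $\sigma_{i,t}$ ($1\le i\le n-1$, $1\le t\le c$) and relations $\rho_i\rho_{i+1}\rho_i=\rho_{i+1}\rho_i\rho_{i+1}$, $\rho_i\rho_j=\rho_j\rho_i$ ($|i-j|\ge2$), $\rho_i^2=1$, $\sigma_{i,t}\sigma_{j,\ell}=\sigma_{j,\ell}\sigma_{i,t}$ ($|i-j|\ge2$), $\sigma_{i,t}\rho_j=\rho_j\sigma_{i,t}$ ($|i-j|\ge2$), $\rho_i\rho_{i+1}\sigma_{i,t}=\sigma_{i+1,t}\rho_i\rho_{i+1}$ and $\rho_i\sigma_{i+1,t}\sigma_{i,t}=\sigma_{i+1,t}\sigma_{i,t}\rho_{i+1}$ ($1\le i\le n-2$). $\mathrm{diag}$ denotes a block diagonal matrix, $I_r$ the $r\times r$ identity. Reducible means there is a nonzero proper subspace of $\mathbb{C}^n$ invariant under all image matrices. *)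

From HB Require Import structures.
From mathcomp Require Import all_boot all_algebra.
From mathcomp Require Import complex.
From mathcomp Require Import Rstruct.
Set Implicit Arguments. Unset Strict Implicit. Unset Printing Implicit Defensive.
Import GRing.Theory Num.Theory.
Local Open Scope ring_scope.

Definition C : numClosedFieldType := Rdefinitions.R[i].

(* blk2 n i a b c d = diag(I_i, [[a, b], [c, d]], I_(n-i-2)),
   i.e. the 2x2 block sits at (0-based) rows/columns i and i+1.
   Paper index i (1-based, 1 <= i <= n-1) corresponds to 0-based i-1 here. *)
Definition blk2 (n i : nat) (a b c d : C) : 'M[C]_n :=
  \matrix_(p < n, q < n)
    if (p == i :> nat) && (q == i :> nat) then a
    else if (p == i :> nat) && (q == i.+1 :> nat) then b
    else if (p == i.+1 :> nat) && (q == i :> nat) then c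
    else if (p == i.+1 :> nat) && (q == i.+1 :> nat) then d
    else (p == q)%:R.

Inductive gen_by (n : nat) (S : 'M[C]_n -> Prop) : 'M[C]_n -> Prop :=
  | gen_one : gen_by S 1%:M
  | gen_base A : S A -> gen_by S A
  | gen_mul A B : gen_by S A -> gen_by S B -> gen_by S (A *m B)
  | gen_inv A : gen_by S A -> gen_by S (invmx A).

(* A set of matrices acting on column vectors C^n is reducible if there is a
   nonzero proper subspace W of C^n with A w \in W for all w \in W.
   W is represented as the row space of a matrix U (rows = spanning vectors,
   as row vectors); A w for w = u^T equals (u *m A^T)^T, so invariance reads
   (U *m A^T <= U)%MS. *)
Definition reducible (n : nat) (G : 'M[C]_n -> Prop) : Prop :=
  exists U : 'M[C]_n,
    (0 < \rank U)%N /\ (\rank U < n)%N /\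
    forall A, G A -> (U *m A^T <= U)%MS.

Definition rep_image (n c : nat) (rho : nat -> 'M[C]_n)
  (sigma : nat -> 'I_c -> 'M[C]_n) : 'M[C]_n -> Prop :=
  gen_by (fun A => exists i : nat, (i < n.-1)%N /\
                   (A = rho i \/ exists t : 'I_c, A = sigma i t)).

Definition omega_rho (n : nat) (i : nat) : 'M[C]_n := blk2 n i 0 1 1 0.

Definition omega1_sigma (n c : nat) (r2 : C) (s2 s3 : 'I_c -> C) (i : nat) (t : 'I_c)
  : 'M[C]_n := blk2 n i 0 (s2 t / r2) (r2 * s3 t) 0.
Definition omega2_sigma (n c : nat) (r2 : C) (s2 s4 : 'I_c -> C) (i : nat) (t : 'I_c)
  : 'M[C]_n := blk2 n i 0 (s2 t / r2) 1 (s4 t).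
Definition omega3_sigma (n c : nat) (r2 : C) (s1 s2 : 'I_c -> C) (i : nat) (t : 'I_c)
  : 'M[C]_n := blk2 n i (s1 t) (s2 t / r2) 1 0.

(* The adjacent transpositions omega'(rho_i) generate the permutation action
   of S_n on C^n, whose only nonzero proper invariant subspaces are the line L
   spanned by (1, ..., 1) and the hyperplane H of vectors with zero coordinate
   sum: if an invariant subspace contains a vector w with w_i <> w_(i+1), then
   w - rho_i w is a nonzero multiple of e_i - e_(i+1), and applying the
   neighbouring transpositions produces every e_j - e_(j+1), which span H.
   So the representation is reducible iff all omega'(sigma_(i,t)) preserve L
   or all preserve H.  Since H is the annihilator of L, a matrix preserves H
   iff its transpose preserves L; and preserving L means having constant row
   sums.  For a block diag(I, [[a, b], [c, d]], I) with n >= 3 the two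
   conditions read a + b = c + d = 1 and a + c = b + d = 1, and the three
   statements reduce to arithmetic on the s_(k,t). *)

From mathcomp Require Import all_boot all_algebra.
From mathcomp Require Import zify.
Set Implicit Arguments.
Unset Strict Implicit.
Unset Printing Implicit Defensive.
Import GRing.Theory.
Local Open Scope ring_scope.

Lemma addr_self_eq0 (V : zmodType) (x y : V) : x + y = x -> y = 0.
Proof. by move/(canRL (addKr x)); rewrite addNr. Qed.

Lemma iff_chain (m i : nat) (P : nat -> Prop) :
  (forall j, (j < m)%N -> P j <-> P j.+1) ->
  (i <= m)%N -> P i -> forall j, (j <= m)%N -> P j.
Proof.
move=> step; suff P0 k : (k <= m)%N -> P k <-> P 0.
  by move=> le_im /(P0 i le_im) Pi j /P0->.
elim: k => [|k IHk] lt_km //; rewrite -(step k lt_km); exact: IHk (ltnW lt_km).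
Qed.

Section FieldMatrices.
Variable F : fieldType.

Lemma stablemx_invmx m n (V : 'M[F]_(m, n)) (f : 'M_n) :
  stablemx V f -> stablemx V (invmx f).
Proof.
move=> Vf; have [f_unit|/invmx_out-> //] := boolP (f \in unitmx).
have /andP[_ V_Vf] : (V *m f == V)%MS.
  by rewrite -(mxrank_leqif_eq Vf) mxrankMfree ?row_free_unit.
by rewrite -{2}(mulmxK f_unit V) submxMr.
Qed.

Lemma stablemx_kermx_tr m n (V : 'M[F]_(m, n)) (f : 'M_n) :
  stablemx V f -> stablemx (kermx V^T) f^T.
Proof.
case/submxP=> D defVf; apply/sub_kermxP.
by rewrite -mulmxA -trmx_mul defVf trmx_mul mulmxA mulmx_ker mul0mx.
Qed.

Lemma const_rowP n (v : 'rV[F]_n) :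
  reflect (forall k l, v 0 k = v 0 l) (v <= (const_mx 1 : 'rV_n))%MS.
Proof.
apply: (iffP sub_rVP) => [[a ->] k l | v_const]; first by rewrite !mxE.
case: n v v_const => [|n] v v_const; first by exists 0; rewrite !thinmx0.
by exists (v 0 0); apply/matrixP => i j; rewrite ord1 !mxE mulr1 (v_const j 0).
Qed.

Lemma const_row_adjacent n (v : 'rV[F]_n) :
  (forall p q : 'I_n, q = p.+1 :> nat -> v 0 p = v 0 q) ->
  (v <= (const_mx 1 : 'rV_n))%MS.
Proof.
case: n v => [|n] v adj; first by rewrite thinmx0 sub0mx.
suff to0 (k : 'I_n.+1) : v 0 k = v 0 0 by apply/const_rowP => k l; rewrite !to0.
case: k => k; elim: k => [|k IHk] lt_k; first by congr (v 0 _); apply: val_inj.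
by rewrite -(IHk (ltnW lt_k)); symmetry; apply: adj.
Qed.

Lemma mul_rV_delta n p (x : 'rV[F]_n) (i : 'I_n) (j : 'I_p) :
  x *m delta_mx i j = x 0 i *: delta_mx 0 j.
Proof.
rewrite -(mul_delta_mx (0 : 'I_1) i j) mulmxA -colE [col i x]mx11_scalar.
by rewrite mul_scalar_mx mxE.
Qed.

End FieldMatrices.

Lemma stablemx_gen_by m n (S : 'M[C]_n -> Prop) (U : 'M[C]_(m, n)) :
  (forall A, S A -> stablemx U A^T) -> forall A, gen_by S A -> stablemx U A^T.
Proof.
move=> SU A; elim=> {A} [|A /SU //|A B _ UA _ UB|A _ UA].
- by rewrite trmx1 mulmx1.
- by rewrite trmx_mul stablemxM.
- by rewrite trmx_inv stablemx_invmx.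
Qed.

Lemma blk2_tr n i a b c d : (blk2 n i a b c d)^T = blk2 n i a c b d.
Proof.
apply/matrixP => p q; rewrite !mxE.
have [pi|pi] := eqVneq (p : nat) i; last have [pi1|pi1] := eqVneq (p : nat) i.+1;
  (have [qi|qi] := eqVneq (q : nat) i; last have [qi1|qi1] := eqVneq (q : nat) i.+1);
  by rewrite ?pi ?pi1 ?qi ?qi1 ?eqxx ?ltn_eqF ?gtn_eqF //= eq_sym.
Qed.

Lemma blk2_delta n (p q : 'I_n) a b c d : q = p.+1 :> nat ->
  blk2 n p a b c d = 1%:M + (a - 1) *: delta_mx p p + b *: delta_mx p q
                     + c *: delta_mx q p + (d - 1) *: delta_mx q q.
Proof.
move=> qE; apply/matrixP => k l; rewrite !mxE -qE.
have pq : (p == q) = false by apply/eqP => /(congr1 val); rewrite /= qE; lia.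
have nat_eqE (u v : 'I_n) : (u == v :> nat) = (u == v) by [].
rewrite !nat_eqE.
have [kp|/negbTE kp] := eqVneq k p; last have [kq|/negbTE kq] := eqVneq k q;
  (have [lp|/negbTE lp] := eqVneq l p; last have [lq|/negbTE lq] := eqVneq l q);
  rewrite ?kp ?kq ?lp ?lq ?pq ?(eq_sym q p) ?pq ?eqxx ?mulr1 ?mulr0 ?addr0 ?add0r //=.
all: by rewrite addrC subrK.
Qed.

Lemma mul_blk2_tr n (x : 'rV[C]_n) (p q : 'I_n) a b c d : q = p.+1 :> nat ->
  x *m (blk2 n p a b c d)^T = x + ((a - 1) * x 0 p + b * x 0 q) *: delta_mx 0 p
                                 + (c * x 0 p + (d - 1) * x 0 q) *: delta_mx 0 q.
Proof.
move=> qE; rewrite blk2_tr (blk2_delta _ _ _ _ qE) !mulmxDr mulmx1.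
rewrite -!scalemxAr !mul_rV_delta !scalerA !scalerDl !addrA.
by rewrite (addrAC (x + _) ((c * _) *: _)).
Qed.

(* Indexed by [nat] so that neighbours [k.+1] need no ordinal bookkeeping;
   it is the zero row when [n <= k]. *)
Definition unit_row n (k : nat) : 'rV[C]_n := \row_l (l == k :> nat)%:R.

Lemma unit_row_delta n (p : 'I_n) : unit_row n p = delta_mx 0 p.
Proof. by apply/matrixP => i l; rewrite ord1 !mxE. Qed.

Lemma swap_diff n (w : 'rV[C]_n) (p q : 'I_n) : q = p.+1 :> nat ->
  w - w *m (omega_rho n p)^T = (w 0 p - w 0 q) *: (unit_row n p - unit_row n q).
Proof.
move=> qE; rewrite (mul_blk2_tr _ _ _ _ _ qE) !unit_row_delta sub0r !mulN1r !mul1r.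
by rewrite -addrA opprD addNKr opprD -scaleNr opprD opprK scalerBr.
Qed.

Section PermutationModule.
Variable n : nat.
Local Notation ones := (const_mx 1 : 'rV[C]_n).
Local Notation zero_sum := (kermx ones^T).
Local Notation e := (unit_row n).

Section SwapStableSubspace.
Variables (m : nat) (U : 'M[C]_(m, n)).
Hypothesis swapU : forall i, (i.+1 < n)%N -> stablemx U (omega_rho n i)^T.

Lemma sub_swap_diff (w : 'rV_n) (p q : 'I_n) : q = p.+1 :> nat ->
  (w <= U)%MS -> w 0 p != w 0 q -> (e p - e q <= U)%MS.
Proof.
move=> qE wU wpq; have : (w - w *m (omega_rho n p)^T <= U)%MS.
  by rewrite addmx_sub // eqmx_opp (submx_trans (submxMr _ wU)) ?swapU -?qE.
rewrite (swap_diff _ qE) => /(scalemx_sub (w 0 p - w 0 q)^-1).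
by rewrite scalerA mulVf ?scale1r // subr_eq0.
Qed.

Lemma adjacent_sub_step j : (j.+2 < n)%N ->
  (e j - e j.+1 <= U)%MS <-> (e j.+1 - e j.+2 <= U)%MS.
Proof.
move=> lt_j2n; have lt_j1n := ltnW lt_j2n; have lt_jn := ltnW lt_j1n.
split=> [sub_j | sub_j1].
- apply: (sub_swap_diff (p := Ordinal lt_j1n) (q := Ordinal lt_j2n) erefl sub_j).
  by rewrite !mxE /= eqxx ?gtn_eqF //= subr0 sub0r oppr_eq0 oner_eq0.
- apply: (sub_swap_diff (p := Ordinal lt_jn) (q := Ordinal lt_j1n) erefl sub_j1).
  by rewrite !mxE /= eqxx ?ltn_eqF //= !subr0 eq_sym oner_eq0.
Qed.

Lemma adjacent_sub_all i : (i.+1 < n)%N -> (e i - e i.+1 <= U)%MS ->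
  forall j, (j.+1 < n)%N -> (e j - e j.+1 <= U)%MS.
Proof.
move=> lt_in sub_i j lt_jn.
apply: (iff_chain (m := n.-2) (P := fun j => (e j - e j.+1 <= U)%MS) _ _ sub_i);
  try lia.
by move=> k lt_k; apply: adjacent_sub_step; lia.
Qed.

Lemma adjacent_sub_to0 : (forall j, (j.+1 < n)%N -> (e j - e j.+1 <= U)%MS) ->
  forall k : 'I_n, (e k - e 0 <= U)%MS.
Proof.
move=> sub_adj k; have lt_kn := ltn_ord k.
apply: (iff_chain (m := n.-1) (i := 0) (P := fun k => (e k - e 0 <= U)%MS));
  rewrite ?subrr ?sub0mx //; try lia.
move=> j lt_j; have sub_j : (e j - e j.+1 <= U)%MS by apply: sub_adj; lia.
have -> : e j.+1 - e 0 = (e j - e 0) - (e j - e j.+1).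
  by rewrite opprB [RHS]addrC addrA subrK.
split=> [sub_j0 | sub_j10]; first by rewrite addmx_sub // eqmx_opp.
by rewrite -[e j - e 0](subrK (e j - e j.+1)) addmx_sub.
Qed.

Lemma zero_sum_sub : (forall k : 'I_n, (e k - e 0 <= U)%MS) -> (zero_sum <= U)%MS.
Proof.
move=> sub_to0; apply/rV_subP => u /sub_kermxP u_sum0.
have sum_u0 : \sum_k u 0 k = 0.
  transitivity ((u *m ones^T) 0 0); last by rewrite u_sum0 mxE.
  by rewrite trmx_const mxE; apply: eq_bigr => k _; rewrite mxE mulr1.
have -> : u = \sum_k u 0 k *: (e k - e 0).
  rewrite {1}[u]row_sum_delta; under [RHS]eq_bigr do rewrite scalerBr.
  rewrite sumrB -scaler_suml sum_u0 scale0r subr0.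
  by apply: eq_bigr => k _; rewrite unit_row_delta.
by rewrite summx_sub // => k _; rewrite scalemx_sub.
Qed.

Lemma swap_stable_cases : (U <= ones)%MS \/ (zero_sum <= U)%MS.
Proof.
have [|/row_subPn[r not_const]] := boolP (U <= ones)%MS; [by left | right].
have /existsP[p /existsP[q /andP[/eqP qE jump]]] : [exists p : 'I_n, exists q : 'I_n,
    (q == p.+1 :> nat) && (row r U 0 p != row r U 0 q)].
  apply: contraR not_const => /existsPn no_jump; apply: const_row_adjacent => p q qE.
  by move/existsPn/(_ q): (no_jump p); rewrite qE eqxx negbK => /eqP.
apply/zero_sum_sub/adjacent_sub_to0/(adjacent_sub_all (i := p)); rewrite -?qE //.
exact: sub_swap_diff qE (row_sub r U) jump.
Qed.

End SwapStableSubspace.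

Lemma rank_ones : (0 < n)%N -> \rank ones = 1%N.
Proof.
move=> n_gt0; rewrite rank_rV; case: eqP => // /matrixP/(_ 0 (Ordinal n_gt0)).
by rewrite !mxE => /eqP; rewrite oner_eq0.
Qed.

Lemma rank_zero_sum : (0 < n)%N -> \rank zero_sum = n.-1.
Proof. by move=> n_gt0; rewrite mxrank_ker mxrank_tr rank_ones // subn1. Qed.

Lemma kermx_zero_sum_tr : (0 < n)%N -> (kermx zero_sum^T :=: ones)%MS.
Proof.
move=> n_gt0; have ones_sub : (ones <= kermx zero_sum^T)%MS.
  by rewrite sub_kermx; apply/eqP/trmx_inj; rewrite trmx_mul trmxK mulmx_ker trmx0.
apply/eqmx_sym/eqmxP; rewrite -(mxrank_leqif_eq ones_sub).
by rewrite mxrank_ker mxrank_tr rank_zero_sum // rank_ones //; lia.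
Qed.

Lemma reducible_swap_gen (S : 'M[C]_n -> Prop) : (1 < n)%N ->
  (forall i, (i.+1 < n)%N -> S (omega_rho n i)) ->
  reducible (gen_by S) <->
  (forall A, S A -> stablemx ones A^T) \/ (forall A, S A -> stablemx ones A).
Proof.
move=> n_gt1 S_swap; have n_gt0 := ltnW n_gt1; split.
- case=> U [rU_gt0 [rU_ltn stableU]].
  have SU A : S A -> stablemx U A^T by move=> SA; apply/stableU/gen_base.
  have [U_ones|zero_sum_U] := swap_stable_cases (fun i lt_in => SU _ (S_swap i lt_in)).
    left=> A /SU; suff /eqmxP eqU : (U == ones)%MS by rewrite (eqmx_stable _ eqU).
    by have := mxrankS U_ones; rewrite -(mxrank_leqif_eq U_ones) rank_ones //; lia.
  right=> A /SU; suff /eqmxP eqU : (zero_sum == U)%MS.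
    rewrite -(eqmx_stable _ eqU) => /stablemx_kermx_tr.
    by rewrite trmxK (eqmx_stable _ (kermx_zero_sum_tr n_gt0)).
  have := mxrankS zero_sum_U.
  by rewrite -(mxrank_leqif_eq zero_sum_U) rank_zero_sum //; lia.
- case=> [stable_ones | stable_ones_tr].
  + exists <<ones>>%MS; rewrite genmxE rank_ones //; split=> //; split=> //.
    apply: stablemx_gen_by => A /stable_ones.
    by rewrite (eqmx_stable _ (genmxE _)).
  + exists zero_sum; rewrite rank_zero_sum //; split; [lia | split; [lia |]].
    by apply: stablemx_gen_by => A /stable_ones_tr/stablemx_kermx_tr.
Qed.

Lemma stable_ones_blk2_tr i a b c d : (2 < n)%N -> (i.+1 < n)%N ->
  stablemx ones (blk2 n i a b c d)^T <-> a + b = 1 /\ c + d = 1.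
Proof.
move=> n_gt2 lt_i1n; pose p : 'I_n := Ordinal (ltnW lt_i1n).
pose q : 'I_n := Ordinal lt_i1n.
have pq : (p == q) = false by apply/eqP => /(congr1 val) /=; lia.
have [k kp kq] : exists2 k : 'I_n, k != p & k != q.
  have [lt_i2n | le_n_i2] := ltnP i.+2 n.
    by exists (Ordinal lt_i2n); apply/eqP => /(congr1 val) /=; lia.
  by exists (Ordinal (ltnW (ltnW n_gt2))); apply/eqP => /(congr1 val) /=; lia.
rewrite (@mul_blk2_tr _ _ p q) // !mxE !mulr1 (addrAC a) addrA.
split=> [/const_rowP ones_const | [-> ->]]; last by rewrite !subrr !scale0r !addr0.
move: (ones_const p k) (ones_const q k).
rewrite !mxE !eqxx (negbTE kp) (negbTE kq) pq (eq_sym q p) pq /= !mulr1 !mulr0 !addr0.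
by rewrite !(addrC 1) !subrK => -> ->.
Qed.

Lemma stable_ones_blk2 i a b c d : (2 < n)%N -> (i.+1 < n)%N ->
  stablemx ones (blk2 n i a b c d) <-> a + c = 1 /\ b + d = 1.
Proof. by rewrite -[blk2 n i a b c d]trmxK blk2_tr; apply: stable_ones_blk2_tr. Qed.

Lemma reducible_blk2_rep k (sigma : nat -> 'I_k -> 'M[C]_n) (a b c d : 'I_k -> C) :
  (2 < n)%N -> (forall i t, sigma i t = blk2 n i (a t) (b t) (c t) (d t)) ->
  reducible (rep_image (@omega_rho n) sigma) <->
  (forall t, a t + b t = 1 /\ c t + d t = 1) \/
  (forall t, a t + c t = 1 /\ b t + d t = 1).
Proof.
move=> n_gt2 sigmaE; rewrite /rep_image reducible_swap_gen; first last.
- by move=> i lt_in; exists i; split; [lia | left].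
- by lia.
have generators_stable (P : 'M_n -> Prop) (Q : C -> C -> C -> C -> Prop) :
    (forall i a b c d, (i.+1 < n)%N -> P (blk2 n i a b c d) <-> Q a b c d) ->
    Q 0 1 1 0 ->
    (forall A, (exists i, (i < n.-1)%N /\
                 (A = omega_rho n i \/ exists t, A = sigma i t)) -> P A) <->
    (forall t, Q (a t) (b t) (c t) (d t)).
  move=> PQ Q_swap; split=> [PS t | Qs A [i [lt_i [->|[t ->]]]]].
  - apply/(PQ 0%N); first lia.
    by rewrite -sigmaE; apply: PS; exists 0%N; split; [lia | right; exists t].
  - by rewrite PQ //; lia.
  - by rewrite sigmaE PQ //; lia.
have := generators_stable (fun A => stablemx ones A^T) _
  (fun i a b c d => @stable_ones_blk2_tr i a b c d n_gt2).
have := generators_stable (fun A => stablemx ones A) _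
  (fun i a b c d => @stable_ones_blk2 i a b c d n_gt2).
rewrite !add0r !addr0; tauto.
Qed.

End PermutationModule.

Theorem proposition6p3 (n c : nat) (r2 : C) (s1 s2 s3 s4 : 'I_c -> C) :
  (3 <= n)%N -> (1 <= c)%N -> r2 != 0 ->
  (forall t, s1 t != 0) -> (forall t, s2 t != 0) ->
  (forall t, s3 t != 0) -> (forall t, s4 t != 0) ->
  [/\ reducible (rep_image (@omega_rho n) (omega1_sigma n r2 s2 s3))
        <-> (forall t, s2 t = r2 /\ s3 t = r2^-1),
      reducible (rep_image (@omega_rho n) (omega2_sigma n r2 s2 s4))
        <-> (forall t, s2 t / r2 + s4 t = 1)
    & reducible (rep_image (@omega_rho n) (omega3_sigma n r2 s1 s2))
        <-> (forall t, s1 t + s2 t / r2 = 1)].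
Proof.
move=> n_gt2 _ r2_neq0 s1_neq0 _ _ s4_neq0.
have sol1 t : s2 t / r2 = 1 /\ r2 * s3 t = 1 <-> s2 t = r2 /\ s3 t = r2^-1.
  by split=> [[/divr1_eq -> /mulr1_eq <-] | [-> ->]]; rewrite ?divff ?mulfV.
split.
- rewrite (reducible_blk2_rep (sigma := omega1_sigma n r2 s2 s3) n_gt2 (fun _ _ => erefl)).
  split=> [[] sol t | sol]; last by left=> t; rewrite add0r addr0; apply/sol1.
    by apply/sol1; case: (sol t); rewrite add0r addr0.
  by apply/sol1; case: (sol t); rewrite add0r addr0.
- rewrite (reducible_blk2_rep (sigma := omega2_sigma n r2 s2 s4) n_gt2 (fun _ _ => erefl)).
  split=> [[] sol t | sol]; last by right=> t; rewrite add0r.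
    by case: (sol t) => _ /addr_self_eq0/eqP; rewrite (negbTE (s4_neq0 t)).
  by case: (sol t).
- rewrite (reducible_blk2_rep (sigma := omega3_sigma n r2 s1 s2) n_gt2 (fun _ _ => erefl)).
  split=> [[] sol t | sol]; last by left=> t; rewrite addr0.
    by case: (sol t).
  by case: (sol t); rewrite addrC => /addr_self_eq0/eqP; rewrite (negbTE (s1_neq0 t)).
Qed.
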